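(* Every metacyclic subgroup of a finite symmetric group $S_m$ contains at most $4$ transpositions, and this bound is attained: the metacyclic subgroup $\langle (1\,2\,3)(4\,5),(1\,2)\rangle\le S_5$ contains exactly the four transpositions $(1\,2),(2\,3),(1\,3),(4\,5)$.
   Context: A group is metacyclic if it has a cyclic normal subgroup with cyclic quotient. *)

From HB Require Import structures.
From mathcomp Require Import all_boot all_order all_algebra all_fingroup all_solvable.
Set Implicit Arguments. Unset Strict Implicit. Unset Printing Implicit Defensive.

Definition is_transposition (T : finType) (t : {perm T}) : bool :=
  [exists x : T, exists y : T, (x != y) && (t == tperm x y)].

Definition transpositions_in (T : finType) (G : {set {perm T}}) : {set {perm T}} :=
  [set t in G | is_transposition t].

(* Points 1..5 of S_5, encoded 0-based as elements of 'I_5. *)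
Definition pt5 (k : nat) : 'I_5 := inord k.

(* (1 2 3)(4 5) and (1 2) in 1-based notation, i.e. (0 1 2)(3 4) and (0 1). *)
Definition gen_a : {perm 'I_5} :=
  tperm (pt5 0) (pt5 1) * tperm (pt5 1) (pt5 2) * tperm (pt5 3) (pt5 4).
Definition gen_b : {perm 'I_5} := tperm (pt5 0) (pt5 1).
Definition example_group : {group {perm 'I_5}} := <<[set gen_a; gen_b]>>%G.

From HB Require Import structures.
From mathcomp Require Import all_boot all_order all_algebra all_fingroup all_solvable.
Set Implicit Arguments. Unset Strict Implicit. Unset Printing Implicit Defensive.
Local Open Scope group_scope.

(* Let N be a cyclic normal subgroup of G with G/N cyclic. A cyclic group has
   at most one involution, so at most one transposition lies in N. The
   transpositions outside N all map to the unique involution of G/N, so for a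
   fixed one t0 the map t |-> t0 t embeds them into N; a product of two
   transpositions has order 1, 2 or 3, and a cyclic group has at most four
   elements with x^2 = 1 or x^3 = 1. If some transposition s lies in N, the
   even element t0 t cannot be the odd involution s, so it has order 1 or 3,
   leaving at most three.
   In the example, (1 2) inverts (1 2 3)(4 5), and the group preserves
   {1, 2, 3}, so each of its transpositions swaps two of 1, 2, 3 or swaps 4, 5. *)

Section CyclicGroups.

Variable gT : finGroupType.
Implicit Types (G : {group gT}) (x y : gT).

Lemma card_Ldiv_cyclic G n : cyclic G -> 0 < n -> #|'Ldiv_n(G)| <= n.
Proof.
move=> cycG n_gt0; have LG := group_Ldiv n (cyclic_abelian cycG).
have /cyclicP[x defL] : cyclic (Group LG) by apply: cyclicS cycG; apply: subsetIl.
have /LdivP[_ /eqP xn1] : x \in 'Ldiv_n(G) by rewrite [_ :&: _]defL cycle_id.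
by rewrite [_ :&: _]defL -orderE dvdn_leq // order_dvdn.
Qed.

Lemma cyclic_involution_unique G x y :
  cyclic G -> x \in G -> y \in G -> x ^+ 2 = 1 -> y ^+ 2 = 1 ->
  x != 1 -> y != 1 -> x = y.
Proof.
move=> cycG Gx Gy x2 y2 nx1 ny1; apply/eqP.
apply: contraTT (card_Ldiv_cyclic cycG (isT : 0 < 2)) => neq_xy; rewrite -ltnNge.
have sub3 : 1 |: [set x; y] \subset 'Ldiv_2(G).
  by apply/subsetP=> z /setU1P[|/set2P[]] ->; apply/LdivP; rewrite ?group1 ?expg1n.
apply: leq_trans (subset_leq_card sub3).
by rewrite cardsU1 cards2 !inE neq_xy !(eq_sym 1) (negPf nx1) (negPf ny1).
Qed.

Lemma card_Ldiv2_Ldiv3_cyclic G : cyclic G -> #|'Ldiv_2(G) :|: 'Ldiv_3(G)| <= 4.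
Proof.
move=> cycG; rewrite -(leq_add2r #|'Ldiv_2(G) :&: 'Ldiv_3(G)|) cardsUI.
apply: leq_trans (leq_add (card_Ldiv_cyclic cycG (isT : 0 < 2))
                          (card_Ldiv_cyclic cycG (isT : 0 < 3))) _.
rewrite -[2 + 3]/(4 + 1) leq_add2l card_gt0; apply/set0Pn; exists 1.
by rewrite inE; apply/andP; split; apply/LdivP; rewrite group1 expg1n.
Qed.

End CyclicGroups.

Lemma mul_involutions_in_cyclic_quotient (gT : finGroupType) (G N : {group gT}) (x y : gT) :
  G \subset 'N(N) -> cyclic (G / N) -> x \in G -> y \in G -> x \notin N ->
  y \notin N -> x ^+ 2 = 1 -> y ^+ 2 = 1 -> x * y \in N.
Proof.
move=> nNG cycGN Gx Gy notNx notNy x2 y2.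
have [Nx Ny] : x \in 'N(N) /\ y \in 'N(N) by split; apply: (subsetP nNG).
have coset_inv z : z \in 'N(N) -> z ^+ 2 = 1 -> coset N z ^+ 2 = 1.
  by move=> Nz z2; rewrite -morphX //= z2 morph1.
have coset_nontriv z : z \in 'N(N) -> z \notin N -> coset N z != 1.
  by move=> Nz; apply: contra => /eqP; apply: coset_idr.
have eq_xy : coset N x = coset N y.
  by apply: (cyclic_involution_unique cycGN); rewrite ?mem_quotient ?coset_inv ?coset_nontriv.
apply: coset_idr; first exact: groupM.
by rewrite morphM //= eq_xy -morphM // -[y * y]/(y ^+ 2) y2 morph1.
Qed.

Section Transpositions.

Variable T : finType.
Implicit Types t u : {perm T}.

Lemma is_transpositionP t :
  reflect (exists a b, a != b /\ t = tperm a b) (is_transposition t).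
Proof.
apply: (iffP existsP) => [[a /existsP[b /andP[ab /eqP->]]] | [a [b [ab ->]]]].
  by exists a, b.
by exists a; apply/existsP; exists b; rewrite ab eqxx.
Qed.

Lemma is_transposition_tperm (a b : T) : a != b -> is_transposition (tperm a b).
Proof. by move=> ab; apply/is_transpositionP; exists a, b. Qed.

Lemma odd_transposition t : is_transposition t -> odd_perm t.
Proof. by case/is_transpositionP=> a [b [ab ->]]; rewrite odd_tperm. Qed.

Lemma transposition_expg2 t : is_transposition t -> t ^+ 2 = 1.
Proof. by case/is_transpositionP=> a [b [_ ->]]; rewrite expgS expg1 tperm2. Qed.

Lemma transposition_neq1 t : is_transposition t -> t != 1.
Proof. by move/odd_transposition; apply: contraTneq => ->; rewrite odd_perm1. Qed.

Lemma mul_tperm_expg23 (a b c d : T) : a != b -> c != d ->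
  (tperm a b * tperm c d) ^+ 2 = 1 \/ (tperm a b * tperm c d) ^+ 3 = 1.
Proof.
wlog: a b c d / a = c \/ [/\ a != c, a != d, b != c & b != d].
  move=> main ab cd; have [ac|ac] := eqVneq a c; first exact: main (or_introl ac) ab cd.
  have [ad|ad] := eqVneq a d.
    by rewrite (tpermC c); apply: main (or_introl ad) ab _; rewrite eq_sym.
  have [bc|bc] := eqVneq b c.
    by rewrite (tpermC a); apply: main (or_introl bc) _ cd; rewrite eq_sym.
  have [bd|bd] := eqVneq b d.
    by rewrite (tpermC a) (tpermC c); apply: main (or_introl bd) _ _; rewrite eq_sym.
  by apply: main => //; right.
case=> [<- {c} | [ac ad bc bd]] ab cd; last first.
  left; have tu : commute (tperm a b) (tperm c d).
    by apply/commgP/conjg_fixP; rewrite tpermJ !tpermD // eq_sym.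
  by rewrite expgS expg1 {2}tu mulgA -(mulgA (tperm a b)) tperm2 mulg1 tperm2.
have [<- | bd] := eqVneq b d; first by left; rewrite tperm2 expg1n.
have tut : tperm a b * tperm a d * tperm a b = tperm b d.
  by rewrite -{1}(tpermV a b) -mulgA -conjgE tpermJ tpermL tpermD // eq_sym.
have utu : tperm a d * tperm a b * tperm a d = tperm b d.
  by rewrite -{1}(tpermV a d) -mulgA -conjgE tpermJ tpermL tpermD 1?tpermC // eq_sym.
right; rewrite (_ : _ ^+ 3 = tperm a b * tperm a d * tperm a b * (tperm a d * tperm a b * tperm a d)).
  by rewrite tut utu tperm2.
by rewrite !expgS expg0 mulg1 !mulgA.
Qed.

Lemma mul_transpositions_expg23 t u : is_transposition t -> is_transposition u ->
  (t * u) ^+ 2 = 1 \/ (t * u) ^+ 3 = 1.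
Proof.
case/is_transpositionP=> a [b [ab ->]]; case/is_transpositionP=> c [d [cd ->]].
exact: mul_tperm_expg23.
Qed.

Lemma odd_mul_transpositions t u : is_transposition t -> is_transposition u ->
  ~~ odd_perm (t * u).
Proof. by move=> /odd_transposition odd_t /odd_transposition odd_u; rewrite odd_permM odd_t odd_u. Qed.

End Transpositions.

Section MetacyclicTranspositions.

Variables (T : finType) (G N : {group {perm T}}).
Hypotheses (cycN : cyclic N) (nNG : G \subset 'N(N)) (cycGN : cyclic (G / N)).
Local Notation Tr := (transpositions_in G).

Lemma card_transpositions_in_setI_cyclic : #|Tr :&: N| <= 1.
Proof.
apply/card_le1_eqP=> s t /setIP[/setIdP[_ trs] Ns] /setIP[/setIdP[_ trt] Nt].
by apply: (cyclic_involution_unique cycN); rewrite ?transposition_expg2 ?transposition_neq1.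
Qed.

Lemma mul_transpositions_notin_Ldiv23 t0 t : t0 \in Tr :\: N -> t \in Tr :\: N ->
  t0 * t \in 'Ldiv_2(N) :|: 'Ldiv_3(N).
Proof.
case/setDP=> /setIdP[Gt0 trt0] notNt0 /setDP[/setIdP[Gt trt] notNt].
have Nt0t : t0 * t \in N.
  by apply: mul_involutions_in_cyclic_quotient nNG cycGN _ _ _ _ _ _; rewrite ?transposition_expg2.
by case: (mul_transpositions_expg23 trt0 trt) => ?; apply/setUP; [left | right]; apply/LdivP.
Qed.

Lemma mul_transpositions_notin_Ldiv3 s t0 t : s \in Tr :&: N ->
  t0 \in Tr :\: N -> t \in Tr :\: N -> t0 * t \in 'Ldiv_3(N).
Proof.
move=> /setIP[/setIdP[_ trs] Ns] t0S tS.
have [[/setIdP[_ trt0] _] [/setIdP[_ trt] _]] := (setDP t0S, setDP tS).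
have [/LdivP[Nt0t t0t2] | //] := setUP (mul_transpositions_notin_Ldiv23 t0S tS).
have [-> | t0t_neq1] := eqVneq (t0 * t) 1; first by apply/LdivP; rewrite group1 expg1n.
have t0t_eq_s : t0 * t = s.
  apply: (cyclic_involution_unique cycN Nt0t Ns t0t2) t0t_neq1 _.
    exact: transposition_expg2.
  exact: transposition_neq1.
by have := odd_mul_transpositions trt0 trt; rewrite t0t_eq_s odd_transposition.
Qed.

Lemma card_transpositions_in_cyclic_ext : #|Tr| <= 4.
Proof.
rewrite -(cardsID N Tr).
have [-> | [t0 t0S]] := set_0Vmem (Tr :\: N).
  by rewrite cards0 addn0 (leq_trans card_transpositions_in_setI_cyclic).
have -> : #|Tr :\: N| = #|[set t0 * t | t in Tr :\: N]| by rewrite card_imset //; apply: mulgI.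
have [-> | [s sTN]] := set_0Vmem (Tr :&: N).
  rewrite cards0 add0n (leq_trans _ (card_Ldiv2_Ldiv3_cyclic cycN)) //.
  apply/subset_leq_card/subsetP=> _ /imsetP[t tS ->].
  exact: mul_transpositions_notin_Ldiv23.
rewrite (leq_add card_transpositions_in_setI_cyclic) //.
rewrite (leq_trans _ (card_Ldiv_cyclic cycN (isT : 0 < 3))) //.
apply/subset_leq_card/subsetP=> _ /imsetP[t tS ->].
exact: mul_transpositions_notin_Ldiv3 sTN t0S tS.
Qed.

End MetacyclicTranspositions.

Lemma card_transpositions_in_metacyclic (T : finType) (G : {group {perm T}}) :
  metacyclic G -> #|transpositions_in G| <= 4.
Proof.
case/metacyclicP=> N [cycN /andP[_ nNG] cycGN].
exact: card_transpositions_in_cyclic_ext cycN nNG cycGN.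
Qed.

Lemma metacyclic_gen_norm_cycle (gT : finGroupType) (a b : gT) :
  b \in 'N(<[a]>) -> metacyclic <<[set a; b]>>.
Proof.
move=> Nb; have Na : a \in 'N(<[a]>) := subsetP (normG _) a (cycle_id a).
have nAG : <<[set a; b]>> \subset 'N(<[a]>) by rewrite gen_subG subUset !sub1set Na Nb.
apply/metacyclicP; exists <[a]>%G; split; first exact: cycle_cyclic.
  by rewrite /normal nAG cycle_subG mem_gen ?set21.
apply: cyclicS (cycle_cyclic (coset <[a]> b)).
rewrite sub_morphim_pre // gen_subG subUset !sub1set !mem_morphpre ?cycle_id //=.
by rewrite coset_id ?cycle_id ?group1.
Qed.

Lemma tperm_astabs (T : finType) (A : {set T}) (x y : T) :
  tperm x y \in 'N(A | 'P) -> (x \in A) = (y \in A).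
Proof. by move/(astabs_act x); rewrite /= apermE tpermL. Qed.

Lemma pt5E k (lt_k5 : k < 5) : pt5 k = Ordinal lt_k5.
Proof. by apply/val_inj; rewrite /= inordK. Qed.

Ltac pt5_ordinals := rewrite ?(pt5E (isT : 0 < 5)) ?(pt5E (isT : 1 < 5))
  ?(pt5E (isT : 2 < 5)) ?(pt5E (isT : 3 < 5)) ?(pt5E (isT : 4 < 5)).

(* [perm] is locked: points are evaluated by unfolding with [permE] first. *)
Ltac pt5_eval := rewrite /gen_a /gen_b ?expgS ?expg0 ?mulg1 ?permM ?perm1;
  pt5_ordinals; rewrite /tperm !permE; apply/val_inj; vm_compute; reflexivity.

Ltac perm5_eval := apply/permP => -[[|[|[|[|[|//]]]]] ?]; pt5_eval.

Lemma gen_a_conj_gen_b : gen_a ^ gen_b = gen_a^-1.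
Proof. by apply/eqP; rewrite eq_mulgV1 invgK /conjg {1}/gen_b tpermV; apply/eqP; perm5_eval. Qed.

Lemma example_group_metacyclic : metacyclic example_group.
Proof.
apply: metacyclic_gen_norm_cycle; apply/normP.
by rewrite -cycleJ gen_a_conj_gen_b cycleV.
Qed.

Lemma tperm34_gen_a : tperm (pt5 3) (pt5 4) = gen_a ^+ 3.
Proof. perm5_eval. Qed.

Lemma tperm02_gen_b : tperm (pt5 0) (pt5 2) = gen_b ^ gen_a.
Proof. by rewrite /gen_b tpermJ tpermC; congr tperm; pt5_eval. Qed.

Lemma tperm12_gen_b : tperm (pt5 1) (pt5 2) = gen_b ^ (gen_a ^+ 2).
Proof. by rewrite /gen_b tpermJ; congr tperm; pt5_eval. Qed.

Definition example_block : {set 'I_5} := [set pt5 0; pt5 1; pt5 2].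

Lemma example_group_astabs_block : example_group \subset 'N(example_block | 'P).
Proof.
rewrite gen_subG subUset !sub1set; apply/andP; split; apply/astabsP=> i;
  rewrite /= apermE /example_block !inE /gen_a /gen_b ?permM; pt5_ordinals; rewrite /tperm !permE;
  by case: i => [[|[|[|[|[|//]]]]] ?]; vm_compute.
Qed.

Lemma tperm_in_example_transpositions (x y : 'I_5) : x != y ->
  (x \in example_block) = (y \in example_block) ->
  tperm x y \in [set tperm (pt5 0) (pt5 1); tperm (pt5 1) (pt5 2);
                     tperm (pt5 0) (pt5 2); tperm (pt5 3) (pt5 4)].
Proof.
rewrite /example_block !inE; pt5_ordinals.
case: x => [[|[|[|[|[|//]]]]] hx]; case: y => [[|[|[|[|[|//]]]]] hy] //= _ same_block;
  rewrite (bool_irrelevance hx isT) (bool_irrelevance hy isT) ?eqxx ?orbT //;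
  by rewrite tpermC ?eqxx ?orbT.
Qed.

Lemma example_transpositions :
  transpositions_in example_group =
    [set tperm (pt5 0) (pt5 1); tperm (pt5 1) (pt5 2);
         tperm (pt5 0) (pt5 2); tperm (pt5 3) (pt5 4)].
Proof.
have [aG bG] : gen_a \in example_group /\ gen_b \in example_group.
  by split; apply: mem_gen; rewrite !inE eqxx ?orbT.
apply/setP=> t; apply/setIdP/idP=> [[Gt /is_transpositionP[x [y [neq_xy t_eq]]]] | ].
  rewrite t_eq in Gt *; apply: tperm_in_example_transpositions neq_xy _.
  exact/tperm_astabs/(subsetP example_group_astabs_block).
rewrite !inE -!orbA => /or4P[] /eqP ->;
  (split; last by apply: is_transposition_tperm; pt5_ordinals).
- exact: bG.
- by rewrite tperm12_gen_b groupJ ?groupX.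
- by rewrite tperm02_gen_b groupJ.
- by rewrite tperm34_gen_a groupX.
Qed.

Theorem mainTheorem12 :
  (forall (m : nat) (G : {group {perm 'I_m}}),
      metacyclic G -> #|transpositions_in G| <= 4)
  /\
  (metacyclic example_group /\
   transpositions_in example_group =
     [set tperm (pt5 0) (pt5 1); tperm (pt5 1) (pt5 2);
          tperm (pt5 0) (pt5 2); tperm (pt5 3) (pt5 4)]).
Proof.
split; first by move=> m G; apply: card_transpositions_in_metacyclic.
by split; [apply: example_group_metacyclic | apply: example_transpositions].
Qed.
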